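(* Let the non-degeneracy, balanced communication and periodic strong connectivity assumptions hold, and let the positive step-sizes of the DLPDS algorithm satisfy $\lim_{k\to\infty}\alpha(k)=0$, $\sum_k\alpha(k)=+\infty$, $\sum_k\alpha(k)^2<+\infty$. Suppose $x^*\in X$ and $\mu^*\in M$ satisfy $\lim_{k\to\infty}x^{[i]}(k)=x^*$ and $\lim_{k\to\infty}\mu^{[i]}(k)=\mu^*$ for all $i\in V$. Then $(x^*,\mu^* )$ is a saddle point of $\mathcal{L}(x,\mu)=f(x)+N\mu^Tg(x)$ over $X\times M$, i.e. $\mathcal{L}(x^*,\mu)\le\mathcal{L}(x^*,\mu^* )\le\mathcal{L}(x,\mu^* )$ for all $x\in X$, $\mu\in M$.
   Context: Same setting and DLPDS algorithm as follows. Agents $V=\{1,\dots,N\}$; convex $f^{[i]}$, $f=\sum_if^{[i]}$; nonempty compact convex $X^{[i]}$, $X=\bigcap_iX^{[i]}$; $g:\mathbb{R}^n\to\mathbb{R}^m$ with convex components; $M^{[i]}=\{\mu\in\mathbb{R}^m_{\ge0}:\|\mu\|\le\rho_i\}$, $\rho_i>0$, $M=\bigcap_iM^{[i]}$; $\mathcal{L}^{[i]}(x,\mu)=f^{[i]}(x)+\mu^Tg(x)$. Weights $a^i_j(k)\ge0$ satisfying non-degeneracy ($a^i_i(k)\ge\eta>0$, $a^i_j(k)\in\{0\}\cup[\eta,1]$), double stochasticity, and periodic strong connectivity (union of edge sets $\{(j,i):j\neq i,a^i_j(k)>0\}$ over any $B$ consecutive times is strongly connected). Iteration: $v^{[i]}_x(k)=\sum_ja^i_j(k)x^{[j]}(k)$,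 $v^{[i]}_\mu(k)=\sum_ja^i_j(k)\mu^{[j]}(k)$, $x^{[i]}(k+1)=P_{X^{[i]}}[v^{[i]}_x(k)-\alpha(k)\mathcal{D}^{[i]}_x(k)]$, $\mu^{[i]}(k+1)=P_{M^{[i]}}[v^{[i]}_\mu(k)+\alpha(k)g(v^{[i]}_x(k))]$, with $x^{[i]}(0)\in X^{[i]}$, $\mu^{[i]}(0)\ge0$, and $\mathcal{D}^{[i]}_x(k)$ a subgradient of $\mathcal{L}^{[i]}(\cdot,v^{[i]}_\mu(k))$ at $v^{[i]}_x(k)$. *)

From Stdlib Require Import Reals Lra.
Open Scope R_scope.

(* Vectors of R^d are represented as functions nat -> R whose coordinates
   of index >= d vanish; agents are indexed by 0..N-1. *)
Definition vec := nat -> R.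

Fixpoint fsum (n : nat) (f : nat -> R) : R :=
  match n with
  | O => 0
  | S p => fsum p f + f p
  end.

Definition is_dim (d : nat) (x : vec) : Prop := forall k, (d <= k)%nat -> x k = 0.

Definition vadd (x y : vec) : vec := fun k => x k + y k.
Definition vsub (x y : vec) : vec := fun k => x k - y k.
Definition vscal (a : R) (x : vec) : vec := fun k => a * x k.
Definition dot (d : nat) (x y : vec) : R := fsum d (fun k => x k * y k).
Definition vnorm (d : nat) (x : vec) : R := sqrt (dot d x x).

Definition vcomb (N : nat) (w : nat -> R) (xs : nat -> vec) : vec :=
  fun k => fsum N (fun j => w j * xs j k).

Definition convex_fun (d : nat) (f : vec -> R) : Prop :=
  forall x y t, is_dim d x -> is_dim d y -> 0 <= t <= 1 ->
    f (vadd (vscal t x) (vscal (1 - t) y)) <= t * f x + (1 - t) * f y.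

Definition convex_set (d : nat) (C : vec -> Prop) : Prop :=
  forall x y t, C x -> C y -> 0 <= t <= 1 -> C (vadd (vscal t x) (vscal (1 - t) y)).

Definition closed_set (d : nat) (C : vec -> Prop) : Prop :=
  forall (u : nat -> vec) (l : vec), (forall k, C (u k)) -> is_dim d l ->
    Un_cv (fun k => vnorm d (vsub (u k) l)) 0 -> C l.

Definition bounded_set (d : nat) (C : vec -> Prop) : Prop :=
  exists B, forall x, C x -> vnorm d x <= B.

Definition ne_compact_convex (d : nat) (C : vec -> Prop) : Prop :=
  (forall x, C x -> is_dim d x) /\ (exists x, C x) /\
  closed_set d C /\ bounded_set d C /\ convex_set d C.

Definition is_proj (d : nat) (C : vec -> Prop) (w p : vec) : Prop :=
  C p /\ forall y, C y -> vnorm d (vsub p w) <= vnorm d (vsub y w).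

Definition is_subgrad (d : nat) (h : vec -> R) (x D : vec) : Prop :=
  forall y, is_dim d y -> h y >= h x + dot d D (vsub y x).

Definition Mball (m : nat) (rho : R) (mu : vec) : Prop :=
  is_dim m mu /\ (forall k, (k < m)%nat -> 0 <= mu k) /\ vnorm m mu <= rho.

Inductive reach (E : nat -> nat -> Prop) : nat -> nat -> Prop :=
  | reach_refl : forall u, reach E u u
  | reach_step : forall u v w, E u v -> reach E v w -> reach E u w.

Definition strongly_connected (N : nat) (E : nat -> nat -> Prop) : Prop :=
  forall u v, (u < N)%nat -> (v < N)%nat -> reach E u v.

(* Weights a k i j = a^i_j(k). Edge (j,i) of the union graph over times
   k0, ..., k0+B-1. *)
Definition union_edges (N : nat) (a : nat -> nat -> nat -> R) (k0 B : nat)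
  (j i : nat) : Prop :=
  (j < N)%nat /\ (i < N)%nat /\ j <> i /\
  exists k, (k0 <= k < k0 + B)%nat /\ a k i j > 0.

Definition Lag (N n m : nat) (f : nat -> vec -> R) (g : vec -> vec) (x mu : vec) : R :=
  fsum N (fun i => f i x) + INR N * dot m mu (g x).

From Stdlib Require Import Reals Lra Lia Psatz FunctionalExtensionality.
Open Scope R_scope.

(* Fix (y, nu) in X x M. Projection onto a convex set moves a point closer to every point of
   the set, and doubly stochastic mixing does not increase sum_i ||z_i - t||^2; hence
   V(k) = sum_i ||mu_i(k) - nu||^2 satisfies V(k+1) <= V(k) + alpha(k) e(k) with
   e(k) -> 2 N (mustar - nu)^T g(xstar). As V >= 0 and sum_k alpha(k) = +oo, that limit is
   nonnegative, which is the left saddle inequality. The same argument applied to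
   sum_i ||x_i(k) - y||^2, with the subgradient inequality, gives the right one; there the
   second-order term alpha(k) ||D_i(k)||^2 vanishes because the subgradients stay bounded: a
   convex function on R^d is Lipschitz on the unit l1-ball around a point, with a constant
   read off from the 2d vertices of that ball through Jensen's inequality. *)

Lemma Rabs_le_inv a b : Rabs a <= b -> - b <= a <= b.
Proof.
  intros H. assert (a <= Rabs a) by apply Rle_abs.
  assert (- a <= Rabs a) by (rewrite <- Rabs_Ropp; apply Rle_abs). lra.
Qed.

Lemma fsum_ext n (u v : nat -> R) :
  (forall l, (l < n)%nat -> u l = v l) -> fsum n u = fsum n v.
Proof.
  induction n as [|n IH]; intros Huv; simpl; [reflexivity|].
  rewrite IH by (intros; apply Huv; lia). rewrite Huv by lia. reflexivity.
Qed.

Lemma fsum_le n (u v : nat -> R) :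
  (forall l, (l < n)%nat -> u l <= v l) -> fsum n u <= fsum n v.
Proof.
  induction n as [|n IH]; intros Huv; simpl; [lra|].
  assert (u n <= v n) by (apply Huv; lia).
  assert (fsum n u <= fsum n v) by (apply IH; intros; apply Huv; lia).
  lra.
Qed.

Lemma fsum_plus n (u v : nat -> R) : fsum n (fun l => u l + v l) = fsum n u + fsum n v.
Proof. induction n as [|n IH]; simpl; [ring | rewrite IH; ring]. Qed.

Lemma fsum_minus n (u v : nat -> R) : fsum n (fun l => u l - v l) = fsum n u - fsum n v.
Proof. induction n as [|n IH]; simpl; [ring | rewrite IH; ring]. Qed.

Lemma fsum_scal n c (u : nat -> R) : fsum n (fun l => c * u l) = c * fsum n u.
Proof. induction n as [|n IH]; simpl; [ring | rewrite IH; ring]. Qed.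

Lemma fsum_const n c : fsum n (fun _ => c) = INR n * c.
Proof. induction n as [|n IH]; simpl fsum; [simpl; ring | rewrite IH, S_INR; ring]. Qed.

Lemma fsum_nonneg n (u : nat -> R) : (forall l, (l < n)%nat -> 0 <= u l) -> 0 <= fsum n u.
Proof.
  intros Hu. rewrite <- (Rmult_0_r (INR n)), <- fsum_const.
  apply fsum_le; assumption.
Qed.

Lemma fsum_ge_term n (u : nat -> R) l :
  (forall l, (l < n)%nat -> 0 <= u l) -> (l < n)%nat -> u l <= fsum n u.
Proof.
  induction n as [|n IH]; intros Hu Hl; [lia|]. simpl.
  assert (0 <= u n) by (apply Hu; lia).
  destruct (Nat.eq_dec l n) as [->|Hne].
  - assert (0 <= fsum n u) by (apply fsum_nonneg; intros; apply Hu; lia). lra.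
  - assert (u l <= fsum n u) by (apply IH; [intros; apply Hu|]; lia). lra.
Qed.

Lemma fsum_abs n (u : nat -> R) : Rabs (fsum n u) <= fsum n (fun l => Rabs (u l)).
Proof.
  induction n as [|n IH]; simpl; [rewrite Rabs_R0; lra|].
  eapply Rle_trans; [apply Rabs_triang | lra].
Qed.

Lemma fsum_exchange N M (F : nat -> nat -> R) :
  fsum N (fun i => fsum M (fun j => F i j)) = fsum M (fun j => fsum N (fun i => F i j)).
Proof.
  induction N as [|N IH]; simpl.
  - rewrite fsum_const. ring.
  - rewrite IH, <- fsum_plus. reflexivity.
Qed.

Lemma fsum_single n i c : (i < n)%nat ->
  fsum n (fun j => if Nat.eq_dec j i then c else 0) = c.
Proof.
  induction n as [|n IH]; intros Hi; [lia|]. simpl.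
  destruct (Nat.eq_dec n i) as [->|Hne].
  - rewrite (fsum_ext _ _ (fun _ => 0)), fsum_const; [ring|].
    intros j Hj. destruct (Nat.eq_dec j i); [lia | reflexivity].
  - rewrite IH by lia. ring.
Qed.

Lemma sum_f_R0_fsum (u : nat -> R) k : sum_f_R0 u k = fsum (S k) u.
Proof. induction k as [|k IH]; simpl; [ring | rewrite IH; reflexivity]. Qed.

Lemma Un_cv_const c : Un_cv (fun _ => c) c.
Proof. intros e He. exists 0%nat. intros. unfold R_dist. rewrite Rminus_diag, Rabs_R0; lra. Qed.

Lemma Un_cv_fsum N (u : nat -> nat -> R) (l : nat -> R) :
  (forall i, (i < N)%nat -> Un_cv (u i) (l i)) ->
  Un_cv (fun k => fsum N (fun i => u i k)) (fsum N l).
Proof.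
  induction N as [|N IH]; intros Hu; simpl; [apply Un_cv_const|].
  apply CV_plus; [apply IH; intros|]; apply Hu; lia.
Qed.

Lemma Un_cv_dist0 u l : Un_cv u l -> Un_cv (fun k => Rabs (u k - l)) 0.
Proof.
  intros Hu e He. destruct (Hu e He) as [K HK]. exists K. intros k Hk.
  unfold R_dist in *. rewrite Rminus_0_r, Rabs_Rabsolu. auto.
Qed.

Lemma Un_cv_squeeze u l w K0 :
  (forall k, (K0 <= k)%nat -> Rabs (u k - l) <= w k) -> Un_cv w 0 -> Un_cv u l.
Proof.
  intros Huw Hw e He. destruct (Hw e He) as [K HK]. exists (max K K0). intros k Hk.
  specialize (HK k ltac:(lia)). specialize (Huw k ltac:(lia)).
  unfold R_dist in *. rewrite Rminus_0_r in HK.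
  eapply Rle_lt_trans; [apply Huw | eapply Rle_lt_trans; [apply Rle_abs | exact HK]].
Qed.

Lemma Un_cv_eventually_lt u e : Un_cv u 0 -> 0 < e ->
  exists K, forall k, (K <= k)%nat -> u k < e.
Proof.
  intros Hu He. destruct (Hu e He) as [K HK]. exists K. intros k Hk.
  specialize (HK k Hk). unfold R_dist in HK. rewrite Rminus_0_r in HK.
  eapply Rle_lt_trans; [apply Rle_abs | exact HK].
Qed.

(* A negative limiting drift, summed against the divergent steps, would push [V] below zero. *)
Lemma drift_limit_nonneg (V alpha e : nat -> R) el :
  (forall k, 0 <= V k) -> (forall k, 0 < alpha k) ->
  cv_infty (fun k => sum_f_R0 alpha k) -> Un_cv e el ->
  (forall k, V (S k) <= V k + alpha k * e k) -> 0 <= el.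
Proof.
  intros HV Ha Hinf He Hstep.
  destruct (Rle_lt_dec 0 el) as [|Hel]; [assumption | exfalso].
  destruct (He (- el / 2) ltac:(lra)) as [K HK].
  assert (Hdrop : forall j, V (K + j)%nat <= V K + el / 2 * (fsum (K + j) alpha - fsum K alpha)).
  { induction j as [|j IH]; [rewrite Nat.add_0_r; lra|].
    replace (K + S j)%nat with (S (K + j)) by lia. simpl fsum.
    specialize (HK (K + j)%nat ltac:(lia)). unfold R_dist in HK. apply Rabs_def2 in HK.
    assert (alpha (K + j)%nat * e (K + j)%nat <= alpha (K + j)%nat * (el / 2))
      by (apply Rmult_le_compat_l; [left; apply Ha | lra]).
    specialize (Hstep (K + j)%nat). lra. }
  destruct (Hinf (fsum K alpha + 2 * V K / - el + 1)) as [k0 Hk0].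
  specialize (Hk0 (K + k0)%nat ltac:(lia)). rewrite sum_f_R0_fsum in Hk0.
  specialize (Hdrop (S k0)). replace (K + S k0)%nat with (S (K + k0)) in Hdrop by lia.
  specialize (HV (S (K + k0))).
  assert (el / 2 * (fsum (S (K + k0)) alpha - fsum K alpha) < el / 2 * (2 * V K / - el + 1))
    by (apply Rmult_lt_gt_compat_neg_l; lra).
  replace (el / 2 * (2 * V K / - el + 1)) with (- V K + el / 2) in H by (field; lra).
  lra.
Qed.

Lemma dot_nonneg d u : 0 <= dot d u u.
Proof. apply fsum_nonneg. intros. apply Rle_0_sqr. Qed.

Lemma dot_vsub_l d u v w : dot d (vsub u v) w = dot d u w - dot d v w.
Proof. unfold dot, vsub. rewrite <- fsum_minus. apply fsum_ext. intros; ring. Qed.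

Lemma dot_vscal_r d u v s : dot d u (vscal s v) = s * dot d u v.
Proof. unfold dot, vscal. rewrite <- fsum_scal. apply fsum_ext. intros; ring. Qed.

Lemma dot_comm d u v : dot d u v = dot d v u.
Proof. apply fsum_ext. intros; ring. Qed.

Lemma vsub_vscal_as_vadd (u v : vec) s : vsub u (vscal s v) = vadd u (vscal s (vscal (-1) v)).
Proof. apply functional_extensionality. intros k. unfold vsub, vadd, vscal. ring. Qed.

Lemma dot_convex_comb_sq d (p y w : vec) t :
  dot d (vsub (vadd (vscal t y) (vscal (1 - t) p)) w) (vsub (vadd (vscal t y) (vscal (1 - t) p)) w) =
  dot d (vsub p w) (vsub p w) + 2 * t * dot d (vsub p w) (vsub y p) + t * t * dot d (vsub y p) (vsub y p).
Proof.
  unfold dot, vsub, vadd, vscal. induction d as [|d IH]; simpl; [ring | rewrite IH; ring].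
Qed.

Lemma dot_sub_sq_split d (p y w : vec) :
  dot d (vsub w y) (vsub w y) =
  dot d (vsub p y) (vsub p y) + 2 * dot d (vsub p w) (vsub y p) + dot d (vsub w p) (vsub w p).
Proof.
  unfold dot, vsub. induction d as [|d IH]; simpl; [ring | rewrite IH; ring].
Qed.

Lemma dot_step_sq d (v u c : vec) s :
  dot d (vsub (vadd v (vscal s u)) c) (vsub (vadd v (vscal s u)) c) =
  dot d (vsub v c) (vsub v c) + s * (2 * dot d (vsub v c) u + s * dot d u u).
Proof.
  unfold dot, vsub, vadd, vscal. induction d as [|d IH]; simpl; [ring | rewrite IH; ring].
Qed.

Lemma coord_le_vnorm d u l : (l < d)%nat -> Rabs (u l) <= vnorm d u.
Proof.
  intros Hl. unfold vnorm. rewrite <- sqrt_Rsqr_abs.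
  apply sqrt_le_1; [apply Rle_0_sqr | apply dot_nonneg|].
  apply (fsum_ge_term d (fun k => u k * u k)); [intros; apply Rle_0_sqr | exact Hl].
Qed.

Lemma Un_cv_coord_of_vnorm d (u : nat -> vec) c l : (l < d)%nat ->
  Un_cv (fun k => vnorm d (vsub (u k) c)) 0 -> Un_cv (fun k => u k l) (c l).
Proof.
  intros Hl Hu. apply (Un_cv_squeeze _ _ _ 0 (fun k _ => coord_le_vnorm d (vsub (u k) c) l Hl) Hu).
Qed.

Lemma Un_cv_dot d (u v : nat -> vec) U W :
  (forall l, (l < d)%nat -> Un_cv (fun k => u k l) (U l)) ->
  (forall l, (l < d)%nat -> Un_cv (fun k => v k l) (W l)) ->
  Un_cv (fun k => dot d (u k) (v k)) (dot d U W).
Proof. intros Hu Hv. apply Un_cv_fsum. intros l Hl. apply CV_mult; auto. Qed.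

Lemma nonneg_of_small_quadratic A Q :
  (forall t, 0 < t <= 1 -> 0 <= 2 * t * A + t * t * Q) -> 0 <= A.
Proof.
  intros Hq. destruct (Rle_lt_dec 0 A) as [|HA]; [assumption | exfalso].
  set (t := Rmin 1 (- A / (Rabs Q + 1))).
  assert (HQ := Rabs_pos Q). assert (HQ' := Rle_abs Q).
  assert (Ht : 0 < t <= 1).
  { split; [apply Rmin_glb_lt; [lra | apply Rdiv_lt_0_compat; lra] | apply Rmin_l]. }
  assert (HtQ : t * (Rabs Q + 1) <= - A).
  { assert (t <= - A / (Rabs Q + 1)) by apply Rmin_r.
    apply (Rmult_le_compat_r (Rabs Q + 1)) in H; [|lra].
    unfold Rdiv in H. rewrite Rmult_assoc, Rinv_l in H; lra. }
  specialize (Hq t Ht). nra.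
Qed.

(* Minimality of [p] along the segment from [p] to [y] inside [C]. *)
Lemma proj_variational d C w p y : convex_set d C -> is_proj d C w p -> C y ->
  0 <= dot d (vsub p w) (vsub y p).
Proof.
  intros HC [Hp Hmin] Hy. apply (nonneg_of_small_quadratic _ (dot d (vsub y p) (vsub y p))).
  intros t Ht. specialize (Hmin _ (HC y p t Hy Hp ltac:(lra))).
  apply sqrt_le_0 in Hmin; [|apply dot_nonneg | apply dot_nonneg].
  rewrite dot_convex_comb_sq in Hmin. lra.
Qed.

Lemma proj_sqdist_le d C w p y : convex_set d C -> is_proj d C w p -> C y ->
  dot d (vsub p y) (vsub p y) <= dot d (vsub w y) (vsub w y).
Proof.
  intros HC Hp Hy. rewrite (dot_sub_sq_split d p y w).
  assert (H := proj_variational d C w p y HC Hp Hy). assert (H' := dot_nonneg d (vsub w p)).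
  lra.
Qed.

Lemma Mball_convex m r : convex_set m (Mball m r).
Proof.
  intros u v t [Hud [Hu0 Hur]] [Hvd [Hv0 Hvr]] Ht. unfold vadd, vscal. split; [|split].
  - intros k Hk. rewrite Hud, Hvd by assumption. ring.
  - intros k Hk. specialize (Hu0 k Hk). specialize (Hv0 k Hk). nra.
  - assert (Hr : 0 <= r) by (eapply Rle_trans; [apply sqrt_pos | apply Hur]).
    assert (Hsq : forall z, vnorm m z <= r -> dot m z z <= r * r).
    { intros z Hz. unfold vnorm in Hz. rewrite <- (sqrt_square r) in Hz by exact Hr.
      apply sqrt_le_0 in Hz; [exact Hz | apply dot_nonneg | apply Rle_0_sqr]. }
    apply Hsq in Hur. apply Hsq in Hvr.
    unfold vnorm. rewrite <- (sqrt_square r) by exact Hr. apply sqrt_le_1; [apply dot_nonneg | apply Rle_0_sqr |].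
    apply Rle_trans with (t * dot m u u + (1 - t) * dot m v v); [|nra].
    unfold dot. rewrite <- !fsum_scal, <- fsum_plus. apply fsum_le. intros l _.
    assert (0 <= t * (1 - t)) by nra. cbv beta.
    assert (0 <= t * (1 - t) * ((u l - v l) * (u l - v l))) by (apply Rmult_le_pos; [lra | apply Rle_0_sqr]).
    nra.
Qed.

Lemma vcomb_dim N d w (xs : nat -> vec) :
  (forall j, (j < N)%nat -> is_dim d (xs j)) -> is_dim d (vcomb N w xs).
Proof.
  intros Hxs k Hk. unfold vcomb. rewrite (fsum_ext _ _ (fun _ => 0)), fsum_const; [ring|].
  intros j Hj. rewrite Hxs by assumption. ring.
Qed.

Lemma vcomb_sub N w (xs : nat -> vec) (y : vec) l : fsum N w = 1 ->
  vcomb N w xs l - y l = fsum N (fun j => w j * (xs j l - y l)).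
Proof.
  intros Hw. unfold vcomb.
  rewrite (fsum_ext N (fun j => w j * (xs j l - y l)) (fun j => w j * xs j l - y l * w j))
    by (intros; ring).
  rewrite fsum_minus, fsum_scal, Hw. ring.
Qed.

Lemma weighted_sq_le_sum_sq N (w z : nat -> R) :
  (forall j, (j < N)%nat -> 0 <= w j) -> fsum N w = 1 ->
  fsum N (fun j => w j * z j) * fsum N (fun j => w j * z j) <= fsum N (fun j => w j * (z j * z j)).
Proof.
  intros Hw Hsum. set (M := fsum N (fun j => w j * z j)).
  assert (Hvar : 0 <= fsum N (fun j => w j * ((z j - M) * (z j - M))))
    by (apply fsum_nonneg; intros; apply Rmult_le_pos; [auto | apply Rle_0_sqr]).
  rewrite (fsum_ext N _ (fun j => w j * (z j * z j) - 2 * M * (w j * z j) + M * M * w j)) in Hvar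
    by (intros; ring).
  rewrite fsum_plus, fsum_minus, !fsum_scal, Hsum in Hvar. fold M in Hvar. lra.
Qed.

Lemma doubly_stochastic_sqdist_le N d (w : nat -> nat -> R) (xs : nat -> vec) (y : vec) :
  (forall i j, (i < N)%nat -> (j < N)%nat -> 0 <= w i j) ->
  (forall i, (i < N)%nat -> fsum N (w i) = 1) ->
  (forall j, (j < N)%nat -> fsum N (fun i => w i j) = 1) ->
  fsum N (fun i => dot d (vsub (vcomb N (w i) xs) y) (vsub (vcomb N (w i) xs) y)) <=
  fsum N (fun j => dot d (vsub (xs j) y) (vsub (xs j) y)).
Proof.
  intros Hw Hrow Hcol. unfold dot, vsub.
  apply Rle_trans with
    (fsum N (fun i => fsum d (fun l => fsum N (fun j => w i j * ((xs j l - y l) * (xs j l - y l)))))).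
  - apply fsum_le. intros i Hi. apply fsum_le. intros l Hl.
    rewrite vcomb_sub by auto. apply weighted_sq_le_sum_sq; auto.
  - rewrite fsum_exchange, (fsum_exchange N d). apply Req_le, fsum_ext. intros l Hl.
    rewrite fsum_exchange. apply fsum_ext. intros j Hj.
    rewrite (fsum_ext N _ (fun i => (xs j l - y l) * (xs j l - y l) * w i j)) by (intros; ring).
    rewrite fsum_scal, Hcol by assumption. ring.
Qed.

Lemma vcomb_Un_cv N (w : nat -> nat -> R) (xs : nat -> nat -> vec) (c : vec) l :
  (forall k j, (j < N)%nat -> 0 <= w k j) -> (forall k, fsum N (w k) = 1) ->
  (forall j, (j < N)%nat -> Un_cv (fun k => xs j k l) (c l)) ->
  Un_cv (fun k => vcomb N (w k) (fun j => xs j k) l) (c l).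
Proof.
  intros Hw Hsum Hxs.
  apply (Un_cv_squeeze _ _ (fun k => fsum N (fun j => Rabs (xs j k l - c l))) 0).
  - intros k _. rewrite vcomb_sub by auto.
    eapply Rle_trans; [apply fsum_abs | apply fsum_le]. intros j Hj.
    assert (w k j <= 1) by (rewrite <- (Hsum k); apply (fsum_ge_term N (w k)); auto).
    rewrite Rabs_mult, (Rabs_pos_eq (w k j)) by auto.
    assert (0 <= Rabs (xs j k l - c l)) by apply Rabs_pos. nra.
  - rewrite <- (Rmult_0_r (INR N)), <- fsum_const.
    apply Un_cv_fsum. intros j Hj. apply Un_cv_dist0. auto.
Qed.

Lemma convex_fun_jensen d h p (w : nat -> R) (xs : nat -> vec) :
  convex_fun d h -> (forall j, (j < p)%nat -> is_dim d (xs j)) ->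
  (forall j, (j < p)%nat -> 0 <= w j) -> fsum p w = 1 ->
  h (vcomb p w xs) <= fsum p (fun j => w j * h (xs j)).
Proof.
  intros Hh. revert w. induction p as [|p IH]; intros w Hxs Hw Hsum; simpl in Hsum; [lra|].
  set (s := fsum p w) in Hsum.
  assert (Hs0 : 0 <= s) by (apply fsum_nonneg; intros; apply Hw; lia).
  assert (Hwp : 0 <= w p) by (apply Hw; lia).
  destruct (Req_dec s 0) as [Hs|Hs].
  - assert (Hw0 : forall j, (j < p)%nat -> w j = 0).
    { intros j Hj. assert (w j <= s) by (apply fsum_ge_term; auto; intros; apply Hw; lia).
      assert (0 <= w j) by (apply Hw; lia). lra. }
    replace (vcomb (S p) w xs) with (xs p).
    2:{ apply functional_extensionality. intros k. unfold vcomb. simpl.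
        rewrite (fsum_ext _ _ (fun _ => 0)), fsum_const; [replace (w p) with 1 by lra; ring|].
        intros j Hj. rewrite Hw0 by assumption. ring. }
    simpl. rewrite (fsum_ext _ _ (fun _ => 0)), fsum_const; [replace (w p) with 1 by lra; lra|].
    intros j Hj. rewrite Hw0 by assumption. ring.
  - assert (Hspos : 0 < s) by lra.
    replace (vcomb (S p) w xs)
      with (vadd (vscal s (vcomb p (fun j => w j / s) xs)) (vscal (1 - s) (xs p))).
    2:{ apply functional_extensionality. intros k. unfold vcomb, vadd, vscal. simpl.
        rewrite <- fsum_scal. replace (1 - s) with (w p) by lra. f_equal.
        apply fsum_ext. intros. field. lra. }
    eapply Rle_trans.
    { apply Hh; [apply vcomb_dim; intros; apply Hxs; lia | apply Hxs; lia | lra]. }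
    assert (IHp : h (vcomb p (fun j => w j / s) xs) <= fsum p (fun j => w j / s * h (xs j))).
    { apply IH; [intros; apply Hxs; lia | intros; apply Rmult_le_pos; [apply Hw; lia | left; apply Rinv_0_lt_compat; lra] |].
      rewrite (fsum_ext p _ (fun j => / s * w j)) by (intros; unfold Rdiv; ring).
      rewrite fsum_scal. fold s. field. lra. }
    replace (fsum (S p) (fun j => w j * h (xs j)))
      with (s * fsum p (fun j => w j / s * h (xs j)) + (1 - s) * h (xs p)).
    2:{ simpl. replace (1 - s) with (w p) by lra. f_equal. rewrite <- fsum_scal.
        apply fsum_ext. intros. field. lra. }
    apply Rplus_le_compat_r, Rmult_le_compat_l; lra.
Qed.

Definition l1 (d : nat) (u : vec) : R := fsum d (fun l => Rabs (u l)).

Definition unit_vec (l : nat) : vec := fun k => if Nat.eq_dec k l then 1 else 0.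

Definition sgn (s : R) : R := if Rle_dec 0 s then 1 else -1.

(* The vertices [c +- e_l] are written [vadd c (vscal (+-1) e_l)] to match
   [l1_ball_as_vcomb], where the sign is [sgn (w_l - c_l)]. *)
Definition l1_lipschitz_const (d : nat) (h : vec -> R) (c : vec) : R :=
  fsum d (fun l => Rabs (h (vadd c (vscal 1 (unit_vec l))) - h c) +
                   Rabs (h (vadd c (vscal (-1) (unit_vec l))) - h c)).

Lemma l1_nonneg d u : 0 <= l1 d u.
Proof. apply fsum_nonneg. intros. apply Rabs_pos. Qed.

Lemma l1_lipschitz_const_nonneg d h c : 0 <= l1_lipschitz_const d h c.
Proof. apply fsum_nonneg. intros. apply Rplus_le_le_0_compat; apply Rabs_pos. Qed.

Lemma Rabs_mul_sgn s : Rabs s * sgn s = s.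
Proof.
  unfold sgn. destruct (Rle_dec 0 s); [rewrite Rabs_pos_eq | rewrite Rabs_left]; lra.
Qed.

Lemma unit_vec_dim d l : (l < d)%nat -> is_dim d (unit_vec l).
Proof. intros Hl k Hk. unfold unit_vec. destruct (Nat.eq_dec k l); [lia | reflexivity]. Qed.

Lemma dot_unit_vec_r d u l s : (l < d)%nat -> dot d u (vscal s (unit_vec l)) = s * u l.
Proof.
  intros Hl. unfold dot, vscal, unit_vec.
  rewrite (fsum_ext d _ (fun k => if Nat.eq_dec k l then s * u l else 0)).
  - apply fsum_single. exact Hl.
  - intros k _. destruct (Nat.eq_dec k l) as [->|]; ring.
Qed.

Lemma l1_ball_as_vcomb d (c w : vec) : is_dim d c -> is_dim d w ->
  w = vcomb (S d)
        (fun l => if Nat.eq_dec l d then 1 - l1 d (vsub w c) else Rabs (w l - c l))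
        (fun l => if Nat.eq_dec l d then c else vadd c (vscal (sgn (w l - c l)) (unit_vec l))).
Proof.
  intros Hc Hw. apply functional_extensionality. intros k. unfold vcomb. simpl.
  destruct (Nat.eq_dec d d) as [_|]; [|lia].
  rewrite (fsum_ext d _ (fun l => c k * Rabs (w l - c l) + (if Nat.eq_dec l k then w k - c k else 0))).
  2:{ intros l Hl. destruct (Nat.eq_dec l d); [lia|]. unfold vadd, vscal, unit_vec.
      destruct (Nat.eq_dec k l) as [->|Hkl].
      - destruct (Nat.eq_dec l l); [|lia]. rewrite Rmult_1_r, Rmult_plus_distr_l, Rabs_mul_sgn. ring.
      - destruct (Nat.eq_dec l k); [lia | ring]. }
  rewrite fsum_plus, fsum_scal. unfold l1, vsub. cbv beta.
  destruct (Nat.lt_ge_cases k d) as [Hk|Hk].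
  - rewrite fsum_single by exact Hk. ring.
  - rewrite (fsum_ext d (fun l => if Nat.eq_dec l k then w k - c k else 0) (fun _ => 0)), fsum_const.
    + rewrite Hc, Hw by exact Hk. ring.
    + intros l Hl. destruct (Nat.eq_dec l k); [lia | reflexivity].
Qed.

Lemma convex_fun_l1_upper d h c w : convex_fun d h -> is_dim d c -> is_dim d w ->
  l1 d (vsub w c) <= 1 -> h w - h c <= l1 d (vsub w c) * l1_lipschitz_const d h c.
Proof.
  intros Hh Hc Hw Hr. set (r := l1 d (vsub w c)) in *. set (K := l1_lipschitz_const d h c).
  assert (Hvertex : forall l, (l < d)%nat ->
    h (vadd c (vscal (sgn (w l - c l)) (unit_vec l))) - h c <= K).
  { intros l Hl. unfold K, l1_lipschitz_const.
    eapply Rle_trans; [|apply (fsum_ge_term d _ l); [|exact Hl]].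
    - unfold sgn. destruct (Rle_dec 0 (w l - c l)); cbv beta;
        [assert (H := Rle_abs (h (vadd c (vscal 1 (unit_vec l))) - h c));
         assert (H' := Rabs_pos (h (vadd c (vscal (-1) (unit_vec l))) - h c))
        |assert (H := Rle_abs (h (vadd c (vscal (-1) (unit_vec l))) - h c));
         assert (H' := Rabs_pos (h (vadd c (vscal 1 (unit_vec l))) - h c))]; lra.
    - intros j _. apply Rplus_le_le_0_compat; apply Rabs_pos. }
  enough (h w <= h c + r * K) by lra.
  rewrite (l1_ball_as_vcomb d c w Hc Hw) at 1. fold r.
  eapply Rle_trans; [apply (convex_fun_jensen d); [exact Hh | | |] | ].
  - intros j Hj. destruct (Nat.eq_dec j d); [exact Hc|].
    intros k Hk. unfold vadd, vscal. rewrite Hc, (unit_vec_dim d) by lia. ring.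
  - intros j Hj. destruct (Nat.eq_dec j d); [lra | apply Rabs_pos].
  - simpl. destruct (Nat.eq_dec d d); [|lia].
    rewrite (fsum_ext d _ (fun l => Rabs (vsub w c l))); [fold (l1 d (vsub w c)); fold r; ring|].
    intros l Hl. destruct (Nat.eq_dec l d); [lia | reflexivity].
  - simpl. destruct (Nat.eq_dec d d); [|lia].
    assert (Hsum : fsum d (fun l => (if Nat.eq_dec l d then 1 - r else Rabs (w l - c l)) *
               h (if Nat.eq_dec l d then c else vadd c (vscal (sgn (w l - c l)) (unit_vec l))))
             <= fsum d (fun l => (h c + K) * Rabs (vsub w c l))).
    { apply fsum_le. intros l Hl. destruct (Nat.eq_dec l d); [lia|]. unfold vsub.
      rewrite (Rmult_comm (h c + K)). apply Rmult_le_compat_l; [apply Rabs_pos | specialize (Hvertex l Hl); lra]. }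
    rewrite fsum_scal in Hsum. fold (l1 d (vsub w c)) in Hsum. fold r in Hsum.
    assert (0 <= r) by apply l1_nonneg. nra.
Qed.

Lemma convex_fun_l1_lipschitz d h c w : convex_fun d h -> is_dim d c -> is_dim d w ->
  l1 d (vsub w c) <= 1 -> Rabs (h w - h c) <= l1_lipschitz_const d h c * l1 d (vsub w c).
Proof.
  intros Hh Hc Hw Hr.
  set (w' := fun k => 2 * c k - w k).
  assert (Hw' : is_dim d w') by (intros k Hk; unfold w'; rewrite Hc, Hw by exact Hk; ring).
  assert (Hr' : l1 d (vsub w' c) = l1 d (vsub w c)).
  { apply fsum_ext. intros l _. unfold vsub, w'. rewrite <- Rabs_Ropp. f_equal. ring. }
  assert (Hmid : c = vadd (vscal (1/2) w) (vscal (1 - 1/2) w')).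
  { apply functional_extensionality. intros k. unfold vadd, vscal, w'. field. }
  assert (Hconv := Hh w w' (1/2) Hw Hw' ltac:(lra)). rewrite <- Hmid in Hconv.
  assert (Hup := convex_fun_l1_upper d h c w Hh Hc Hw Hr).
  assert (Hup' := convex_fun_l1_upper d h c w' Hh Hc Hw' ltac:(lra)). rewrite Hr' in Hup'.
  apply Rabs_le. lra.
Qed.

Lemma Un_cv_l1 d (z : nat -> vec) c :
  (forall l, (l < d)%nat -> Un_cv (fun k => z k l) (c l)) ->
  Un_cv (fun k => l1 d (vsub (z k) c)) 0.
Proof.
  intros Hz. rewrite <- (Rmult_0_r (INR d)), <- fsum_const.
  apply Un_cv_fsum. intros l Hl. apply Un_cv_dist0. auto.
Qed.

Lemma convex_fun_Un_cv d h c (z : nat -> vec) : convex_fun d h -> is_dim d c ->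
  (forall k, is_dim d (z k)) -> (forall l, (l < d)%nat -> Un_cv (fun k => z k l) (c l)) ->
  Un_cv (fun k => h (z k)) (h c).
Proof.
  intros Hh Hc Hz Hzc. assert (Hl1 := Un_cv_l1 d z c Hzc).
  destruct (Un_cv_eventually_lt _ 1 Hl1 ltac:(lra)) as [K0 HK0].
  apply (Un_cv_squeeze _ _ (fun k => l1_lipschitz_const d h c * l1 d (vsub (z k) c)) K0).
  - intros k Hk. apply convex_fun_l1_lipschitz; auto. left; auto.
  - rewrite <- (Rmult_0_r (l1_lipschitz_const d h c)). apply CV_mult; [apply Un_cv_const | exact Hl1].
Qed.

(* Testing the subgradient inequality at [z +- e_l / 2], which stays in the unit l1-ball. *)
Lemma subgrad_coord_bound d h c z Dv K : is_dim d z -> is_subgrad d h z Dv ->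
  l1 d (vsub z c) <= 1/2 ->
  (forall w, is_dim d w -> l1 d (vsub w c) <= 1 -> Rabs (h w - h c) <= K) ->
  forall l, (l < d)%nat -> Rabs (Dv l) <= 4 * K.
Proof.
  intros Hz Hsg Hzc Hball l Hl.
  set (s := sgn (Dv l) / 2).
  set (y := vadd z (vscal s (unit_vec l))).
  assert (Hy : is_dim d y).
  { intros k Hk. unfold y, vadd, vscal. rewrite Hz, (unit_vec_dim d) by lia. ring. }
  assert (Hyc : l1 d (vsub y c) <= 1).
  { apply Rle_trans with (l1 d (vsub z c) + 1/2); [|lra]. unfold l1.
    rewrite <- (fsum_single d l (1/2)) by exact Hl. rewrite <- fsum_plus.
    apply fsum_le. intros k _. unfold vsub, y, vadd, vscal, unit_vec, s.
    destruct (Nat.eq_dec k l); [|rewrite Rmult_0_r, Rplus_0_r; lra].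
    replace (z k + sgn (Dv l) / 2 * 1 - c k) with ((z k - c k) + sgn (Dv l) / 2) by ring.
    eapply Rle_trans; [apply Rabs_triang|].
    enough (Rabs (sgn (Dv l) / 2) = 1/2) by lra.
    unfold sgn, Rabs. destruct (Rle_dec 0 (Dv l)); destruct Rcase_abs; lra. }
  assert (Hstep := Hsg y Hy).
  replace (vsub y z) with (vscal s (unit_vec l)) in Hstep
    by (apply functional_extensionality; intros k; unfold vsub, y, vadd; ring).
  rewrite dot_unit_vec_r in Hstep by exact Hl.
  assert (Hsd : s * Dv l = Rabs (Dv l) / 2)
    by (unfold s, sgn, Rabs; destruct (Rle_dec 0 (Dv l)); destruct Rcase_abs; lra).
  assert (Hy' := Hball y Hy Hyc). assert (Hz' := Hball z Hz ltac:(lra)).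
  apply Rabs_le_inv in Hy'. apply Rabs_le_inv in Hz'. lra.
Qed.

Lemma lagrangian_l1_ball_bound d m h0 (g : vec -> vec) (nu c w : vec) :
  convex_fun d h0 -> (forall l, (l < m)%nat -> convex_fun d (fun z => g z l)) ->
  is_dim d c -> is_dim d w -> l1 d (vsub w c) <= 1 ->
  Rabs ((h0 w + dot m nu (g w)) - (h0 c + dot m nu (g c))) <=
  l1_lipschitz_const d h0 c + fsum m (fun l => Rabs (nu l) * l1_lipschitz_const d (fun z => g z l) c).
Proof.
  intros Hh0 Hg Hc Hw Hr. assert (Hr0 := l1_nonneg d (vsub w c)).
  assert (Hlip : forall h, convex_fun d h -> Rabs (h w - h c) <= l1_lipschitz_const d h c).
  { intros h Hh. eapply Rle_trans; [apply (convex_fun_l1_lipschitz d); auto|].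
    assert (H := l1_lipschitz_const_nonneg d h c). nra. }
  replace (h0 w + dot m nu (g w) - (h0 c + dot m nu (g c)))
    with ((h0 w - h0 c) + fsum m (fun l => nu l * (g w l - g c l))).
  2:{ unfold dot. rewrite (fsum_ext m (fun l => nu l * (g w l - g c l))
        (fun l => nu l * g w l - nu l * g c l)) by (intros; ring).
      rewrite fsum_minus. ring. }
  eapply Rle_trans; [apply Rabs_triang | apply Rplus_le_compat; [apply Hlip; exact Hh0|]].
  eapply Rle_trans; [apply fsum_abs | apply fsum_le]. intros l Hl.
  rewrite Rabs_mult. apply Rmult_le_compat_l; [apply Rabs_pos | apply (Hlip (fun z => g z l)), Hg, Hl].
Qed.

Lemma projected_mixing_step N d (C : nat -> vec -> Prop) (w : nat -> nat -> R)
    (zs zs' u : nat -> vec) (t : vec) (s : R) :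
  (forall i j, (i < N)%nat -> (j < N)%nat -> 0 <= w i j) ->
  (forall i, (i < N)%nat -> fsum N (w i) = 1) ->
  (forall j, (j < N)%nat -> fsum N (fun i => w i j) = 1) ->
  (forall i, (i < N)%nat -> convex_set d (C i)) -> (forall i, (i < N)%nat -> C i t) ->
  (forall i, (i < N)%nat -> is_proj d (C i) (vadd (vcomb N (w i) zs) (vscal s (u i))) (zs' i)) ->
  fsum N (fun i => dot d (vsub (zs' i) t) (vsub (zs' i) t)) <=
  fsum N (fun i => dot d (vsub (zs i) t) (vsub (zs i) t)) +
  s * fsum N (fun i => 2 * dot d (vsub (vcomb N (w i) zs) t) (u i) + s * dot d (u i) (u i)).
Proof.
  intros Hw Hrow Hcol HC Ht Hp.
  eapply Rle_trans.
  { apply fsum_le. intros i Hi. apply (proj_sqdist_le d (C i)); auto. }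
  rewrite (fsum_ext N _ (fun i => dot d (vsub (vcomb N (w i) zs) t) (vsub (vcomb N (w i) zs) t) +
       s * (2 * dot d (vsub (vcomb N (w i) zs) t) (u i) + s * dot d (u i) (u i))))
    by (intros; apply dot_step_sq).
  rewrite fsum_plus, fsum_scal.
  assert (H := doubly_stochastic_sqdist_le N d w zs t Hw Hrow Hcol). lra.
Qed.

Section DLPDS.

Variables (N n m : nat) (f : nat -> vec -> R) (Xs : nat -> vec -> Prop) (g : vec -> vec)
  (rho : nat -> R) (a : nat -> nat -> nat -> R) (alpha : nat -> R) (x mu D : nat -> nat -> vec)
  (xstar mustar : vec).

Hypothesis HN : (0 < N)%nat.
Hypothesis Hf : forall i, (i < N)%nat -> convex_fun n (f i).
Hypothesis HX : forall i, (i < N)%nat -> ne_compact_convex n (Xs i).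
Hypothesis Hg : forall l, (l < m)%nat -> convex_fun n (fun y => g y l).
Hypothesis Ha_nonneg : forall k i j, (i < N)%nat -> (j < N)%nat -> 0 <= a k i j.
Hypothesis Ha_row : forall k i, (i < N)%nat -> fsum N (fun j => a k i j) = 1.
Hypothesis Ha_col : forall k j, (j < N)%nat -> fsum N (fun i => a k i j) = 1.
Hypothesis Halpha_pos : forall k, 0 < alpha k.
Hypothesis Halpha_lim : Un_cv alpha 0.
Hypothesis Halpha_sum : cv_infty (fun k => sum_f_R0 alpha k).
Hypothesis Hx0 : forall i, (i < N)%nat -> Xs i (x i 0%nat).
Hypothesis HD : forall i k, (i < N)%nat ->
  is_dim n (D i k) /\
  is_subgrad n (fun y => f i y + dot m (vcomb N (a k i) (fun j => mu j k)) (g y))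
    (vcomb N (a k i) (fun j => x j k)) (D i k).
Hypothesis Hx : forall i k, (i < N)%nat ->
  is_proj n (Xs i) (vsub (vcomb N (a k i) (fun j => x j k)) (vscal (alpha k) (D i k))) (x i (S k)).
Hypothesis Hmu : forall i k, (i < N)%nat ->
  is_proj m (Mball m (rho i))
    (vadd (vcomb N (a k i) (fun j => mu j k)) (vscal (alpha k) (g (vcomb N (a k i) (fun j => x j k)))))
    (mu i (S k)).
Hypothesis Hxstar : forall i, (i < N)%nat -> Xs i xstar.
Hypothesis Hxlim : forall i, (i < N)%nat -> Un_cv (fun k => vnorm n (vsub (x i k) xstar)) 0.
Hypothesis Hmulim : forall i, (i < N)%nat -> Un_cv (fun k => vnorm m (vsub (mu i k) mustar)) 0.

Let xbar i k := vcomb N (a k i) (fun j => x j k).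
Let mubar i k := vcomb N (a k i) (fun j => mu j k).

Lemma x_dim i k : (i < N)%nat -> is_dim n (x i k).
Proof.
  intros Hi. apply (proj1 (HX i Hi)). destruct k; [apply Hx0 | apply (Hx i k)]; exact Hi.
Qed.

Lemma xstar_dim : is_dim n xstar.
Proof. apply (proj1 (HX 0 HN)), Hxstar, HN. Qed.

Lemma xbar_dim i k : is_dim n (xbar i k).
Proof. apply vcomb_dim. intros j Hj. apply x_dim, Hj. Qed.

Lemma xbar_Un_cv i l : (i < N)%nat -> (l < n)%nat -> Un_cv (fun k => xbar i k l) (xstar l).
Proof.
  intros Hi Hl. apply vcomb_Un_cv; [intros; auto | intros; apply Ha_row, Hi |].
  intros j Hj. apply (Un_cv_coord_of_vnorm n), Hxlim; assumption.
Qed.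

Lemma mubar_Un_cv i l : (i < N)%nat -> (l < m)%nat -> Un_cv (fun k => mubar i k l) (mustar l).
Proof.
  intros Hi Hl. apply vcomb_Un_cv; [intros; auto | intros; apply Ha_row, Hi |].
  intros j Hj. apply (Un_cv_coord_of_vnorm m), Hmulim; assumption.
Qed.

Lemma g_xbar_Un_cv i l : (i < N)%nat -> (l < m)%nat -> Un_cv (fun k => g (xbar i k) l) (g xstar l).
Proof.
  intros Hi Hl. apply (convex_fun_Un_cv n (fun z => g z l)); auto using xstar_dim, xbar_dim.
  intros; apply xbar_Un_cv; assumption.
Qed.

Lemma dual_inequality nu : (forall i, (i < N)%nat -> Mball m (rho i) nu) ->
  Lag N n m f g xstar nu <= Lag N n m f g xstar mustar.
Proof.
  intros Hnu.
  assert (Hdrift : 0 <= fsum N (fun i =>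
            2 * dot m (vsub mustar nu) (g xstar) + 0 * dot m (g xstar) (g xstar))).
  { apply (drift_limit_nonneg (fun k => fsum N (fun i => dot m (vsub (mu i k) nu) (vsub (mu i k) nu)))
      alpha (fun k => fsum N (fun i => 2 * dot m (vsub (mubar i k) nu) (g (xbar i k)) +
                                      alpha k * dot m (g (xbar i k)) (g (xbar i k))))).
    - intros k. apply fsum_nonneg. intros. apply dot_nonneg.
    - exact Halpha_pos.
    - exact Halpha_sum.
    - apply Un_cv_fsum. intros i Hi. apply CV_plus; apply CV_mult.
      + apply Un_cv_const.
      + apply Un_cv_dot; intros l Hl;
          [apply CV_minus; [apply mubar_Un_cv | apply Un_cv_const] | apply g_xbar_Un_cv]; assumption.
      + exact Halpha_lim.
      + apply Un_cv_dot; intros l Hl; apply g_xbar_Un_cv; assumption.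
    - intros k. apply (projected_mixing_step N m (fun i => Mball m (rho i)) (a k)); auto.
      intros. apply Mball_convex. }
  rewrite fsum_const, dot_vsub_l in Hdrift. unfold Lag.
  assert (0 < INR N) by (apply lt_0_INR, HN). nra.
Qed.

Lemma subgrad_sq_vanishes i : (i < N)%nat -> Un_cv (fun k => alpha k * dot n (D i k) (D i k)) 0.
Proof.
  intros Hi.
  set (lip_g l := l1_lipschitz_const n (fun z => g z l) xstar).
  set (B k := l1_lipschitz_const n (f i) xstar + fsum m (fun l => Rabs (mubar i k l) * lip_g l)).
  set (Bstar := l1_lipschitz_const n (f i) xstar + fsum m (fun l => Rabs (mustar l) * lip_g l)).
  assert (HB : Un_cv B Bstar).
  { apply CV_plus; [apply Un_cv_const|]. apply Un_cv_fsum. intros l Hl.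
    apply CV_mult; [apply cv_cvabs, mubar_Un_cv; assumption | apply Un_cv_const]. }
  destruct (Un_cv_eventually_lt _ (1/2) (Un_cv_l1 n (xbar i) xstar (fun l Hl => xbar_Un_cv i l Hi Hl)) ltac:(lra))
    as [K0 HK0].
  apply (Un_cv_squeeze _ _ (fun k => alpha k * (INR n * ((4 * B k) * (4 * B k)))) K0).
  - intros k Hk. assert (Ha := Halpha_pos k).
    rewrite Rminus_0_r, Rabs_pos_eq by (apply Rmult_le_pos; [lra | apply dot_nonneg]).
    apply Rmult_le_compat_l; [lra|].
    destruct (HD i k Hi) as [_ Hsub].
    assert (Hcoord := subgrad_coord_bound n _ xstar (xbar i k) (D i k) (B k) (xbar_dim i k) Hsub
      ltac:(left; apply HK0, Hk)
      (fun w Hw Hr => lagrangian_l1_ball_bound n m (f i) g (mubar i k) xstar w (Hf i Hi) Hg xstar_dim Hw Hr)).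
    unfold dot. rewrite <- fsum_const. apply fsum_le. intros l Hl.
    specialize (Hcoord l Hl). apply Rabs_le_inv in Hcoord. nra.
  - rewrite <- (Rmult_0_l (INR n * ((4 * Bstar) * (4 * Bstar)))).
    apply CV_mult; [exact Halpha_lim|].
    apply CV_mult; [apply Un_cv_const|].
    apply CV_mult; apply CV_mult; [apply Un_cv_const | exact HB | apply Un_cv_const | exact HB].
Qed.

Lemma primal_descent_step y k : is_dim n y -> (forall i, (i < N)%nat -> Xs i y) ->
  fsum N (fun i => dot n (vsub (x i (S k)) y) (vsub (x i (S k)) y)) <=
  fsum N (fun i => dot n (vsub (x i k) y) (vsub (x i k) y)) +
  alpha k * fsum N (fun i =>
    2 * ((f i y + dot m (mubar i k) (g y)) - (f i (xbar i k) + dot m (mubar i k) (g (xbar i k)))) +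
    alpha k * dot n (D i k) (D i k)).
Proof.
  intros Hyd Hy. eapply Rle_trans.
  { apply (projected_mixing_step N n Xs (a k) (fun j => x j k) (fun i => x i (S k))
      (fun i => vscal (-1) (D i k)) y (alpha k)); auto.
    - intros i Hi. apply (HX i Hi).
    - intros i Hi. rewrite <- vsub_vscal_as_vadd. apply Hx, Hi. }
  apply Rplus_le_compat_l, Rmult_le_compat_l; [left; apply Halpha_pos|].
  apply fsum_le. intros i Hi. destruct (HD i k Hi) as [_ Hsub]. specialize (Hsub y Hyd).
  unfold xbar, mubar in *. cbv beta in Hsub.
  rewrite (dot_comm n (D i k)), dot_vsub_l in Hsub.
  rewrite dot_vscal_r, dot_vsub_l, dot_vscal_r, (dot_comm n (vscal (-1) (D i k))), dot_vscal_r.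
  lra.
Qed.

Lemma primal_inequality y : (forall i, (i < N)%nat -> Xs i y) ->
  Lag N n m f g xstar mustar <= Lag N n m f g y mustar.
Proof.
  intros Hy. assert (Hyd : is_dim n y) by apply (proj1 (HX 0 HN)), Hy, HN.
  assert (Hdrift : 0 <= fsum N (fun i =>
            2 * ((f i y + dot m mustar (g y)) - (f i xstar + dot m mustar (g xstar))) + 0)).
  { apply (drift_limit_nonneg (fun k => fsum N (fun i => dot n (vsub (x i k) y) (vsub (x i k) y)))
      alpha (fun k => fsum N (fun i =>
        2 * ((f i y + dot m (mubar i k) (g y)) - (f i (xbar i k) + dot m (mubar i k) (g (xbar i k)))) +
        alpha k * dot n (D i k) (D i k)))).
    - intros k. apply fsum_nonneg. intros. apply dot_nonneg.
    - exact Halpha_pos.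
    - exact Halpha_sum.
    - apply Un_cv_fsum. intros i Hi. apply CV_plus; [|apply subgrad_sq_vanishes, Hi].
      apply CV_mult; [apply Un_cv_const|]. apply CV_minus; apply CV_plus.
      + apply Un_cv_const.
      + apply Un_cv_dot; intros l Hl; [apply mubar_Un_cv | apply Un_cv_const]; assumption.
      + apply (convex_fun_Un_cv n); auto using xstar_dim, xbar_dim.
        intros; apply xbar_Un_cv; assumption.
      + apply Un_cv_dot; intros l Hl; [apply mubar_Un_cv | apply g_xbar_Un_cv]; assumption.
    - intros k. apply primal_descent_step; assumption. }
  rewrite (fsum_ext N _ (fun i => 2 * f i y - 2 * f i xstar +
             2 * (dot m mustar (g y) - dot m mustar (g xstar)))) in Hdrift by (intros; ring).
  rewrite fsum_plus, fsum_minus, !fsum_scal, fsum_const in Hdrift. unfold Lag. lra.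
Qed.

End DLPDS.

Theorem mainTheorem8
  (N n m : nat) (HN : (0 < N)%nat)
  (f : nat -> vec -> R)                 (* f i = f^[i] *)
  (Xs : nat -> vec -> Prop)             (* Xs i = X^[i] *)
  (g : vec -> vec)                      (* components g k, k < m *)
  (rho : nat -> R)
  (a : nat -> nat -> nat -> R)          (* a k i j = a^i_j(k) *)
  (eta : R) (B : nat)
  (alpha : nat -> R)
  (x mu D : nat -> nat -> vec)          (* x i k = x^[i](k), D i k = D^[i]_x(k) *)
  (xstar mustar : vec)
  (Hf : forall i, (i < N)%nat -> convex_fun n (f i))
  (HX : forall i, (i < N)%nat -> ne_compact_convex n (Xs i))
  (Hg : forall l, (l < m)%nat -> convex_fun n (fun y => g y l))
  (Hrho : forall i, (i < N)%nat -> 0 < rho i)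
  (* non-degeneracy *)
  (Heta : 0 < eta)
  (Ha_nonneg : forall k i j, (i < N)%nat -> (j < N)%nat -> 0 <= a k i j)
  (Ha_diag : forall k i, (i < N)%nat -> a k i i >= eta)
  (Ha_nd : forall k i j, (i < N)%nat -> (j < N)%nat ->
              a k i j = 0 \/ (eta <= a k i j <= 1))
  (* double stochasticity *)
  (Ha_row : forall k i, (i < N)%nat -> fsum N (fun j => a k i j) = 1)
  (Ha_col : forall k j, (j < N)%nat -> fsum N (fun i => a k i j) = 1)
  (* periodic strong connectivity *)
  (HB : (0 < B)%nat)
  (Hconn : forall k0, strongly_connected N (union_edges N a k0 B))
  (Halpha_pos : forall k, 0 < alpha k)
  (Halpha_lim : Un_cv alpha 0)
  (Halpha_sum : cv_infty (fun k => sum_f_R0 alpha k))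
  (Halpha_sq : exists l, Un_cv (fun k => sum_f_R0 (fun t => alpha t ^ 2) k) l)
  (Hx0 : forall i, (i < N)%nat -> Xs i (x i 0%nat))
  (Hmu0 : forall i, (i < N)%nat -> is_dim m (mu i 0%nat) /\
            forall l, (l < m)%nat -> 0 <= mu i 0%nat l)
  (* DLPDS iteration *)
  (HD : forall i k, (i < N)%nat ->
     is_dim n (D i k) /\
     is_subgrad n
       (fun y => f i y + dot m (vcomb N (a k i) (fun j => mu j k)) (g y))
       (vcomb N (a k i) (fun j => x j k)) (D i k))
  (Hx : forall i k, (i < N)%nat ->
     is_proj n (Xs i)
       (vsub (vcomb N (a k i) (fun j => x j k)) (vscal (alpha k) (D i k)))
       (x i (S k)))
  (Hmu : forall i k, (i < N)%nat ->
     is_proj m (Mball m (rho i))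
       (vadd (vcomb N (a k i) (fun j => mu j k))
             (vscal (alpha k) (g (vcomb N (a k i) (fun j => x j k)))))
       (mu i (S k)))
  (Hxstar : forall i, (i < N)%nat -> Xs i xstar)
  (Hmustar : forall i, (i < N)%nat -> Mball m (rho i) mustar)
  (Hxlim : forall i, (i < N)%nat -> Un_cv (fun k => vnorm n (vsub (x i k) xstar)) 0)
  (Hmulim : forall i, (i < N)%nat -> Un_cv (fun k => vnorm m (vsub (mu i k) mustar)) 0)
  : forall y nu,
      (forall i, (i < N)%nat -> Xs i y) ->
      (forall i, (i < N)%nat -> Mball m (rho i) nu) ->
      Lag N n m f g xstar nu <= Lag N n m f g xstar mustar /\
      Lag N n m f g xstar mustar <= Lag N n m f g y mustar.
Proof.
  intros y nu Hy Hnu. split.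
  - eapply dual_inequality; eauto.
  - eapply primal_inequality; eauto.
Qed.
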